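(* Let $(S,d)$ be a connected metric space. Then $J^S_\bullet\subset\operatorname{ext}(B^S_\bullet)$ for $\bullet=\mathrm{FM}$ and for $\bullet=\mathrm{BL}$.
   Context: $\mathrm{BL}(S)$ is the space of bounded real-valued Lipschitz functions on $S$, $|f|_L=\sup_{x\neq y}|f(x)-f(y)|/d(x,y)$, $\|f\|_{\mathrm{BL}}=\|f\|_\infty+|f|_L$, $\|f\|_{\mathrm{FM}}=\max(\|f\|_\infty,|f|_L)$, $B^S_\bullet=\{f\in\mathrm{BL}(S):\|f\|_\bullet\le1\}$, $\operatorname{ext}$ denotes the set of extreme points. For $f\in\mathrm{BL}(S)$, $M_f=\{x\in S:|f(x)|=\|f\|_\infty\}$. $J^S_{\mathrm{FM}}$ is the set of $f\in B^S_{\mathrm{FM}}$ with $\|f\|_\infty=1$ for which there is a finite non-empty $P_f\subset S$ such that for every $x\in S\setminus M_f$ there exists $p\in P_f$ with $|f(x)-f(p)|=d(x,p)$. $J^S_{\mathrm{BL}}=\{\mathbf{1},-\mathbf{1}\}\cup\hat J^S_{\mathrm{BL}}$, where $\hat J^S_{\mathrm{BL}}$ is the set of $f\in B^S_{\mathrm{BL}}$ with $\|f\|_{\mathrm{BL}}=1$, $f(M_f)=\{\|f\|_\infty,-\|f\|_\infty\}$, and for which there is a finite non-empty $P_f\subset S$ such that for every $x\in S\setminus M_f$ there exists $p\in P_f$ with $|f(x)-f(p)|=(1-\|f\|_\infty)d(x,p)$. *)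

From HB Require Import structures.
From mathcomp Require Import all_boot all_order all_algebra.
From mathcomp Require Import all_classical all_reals.
Set Implicit Arguments. Unset Strict Implicit. Unset Printing Implicit Defensive.
Import Order.TTheory GRing.Theory Num.Theory.
Local Open Scope classical_set_scope.
Local Open Scope ring_scope.

Section Defs.
Variables (R : realType) (S : Type) (d : S -> S -> R).

Definition is_metric : Prop :=
  (forall x y, d x y = 0 <-> x = y) /\
  (forall x y, d x y = d y x) /\
  (forall x y z, d x z <= d x y + d y z).

Definition metric_open (U : set S) : Prop :=
  forall x, U x -> exists2 e : R, 0 < e & forall y, d x y < e -> U y.

Definition metric_connected : Prop :=
  forall U : set S, metric_open U -> metric_open (~` U) -> U = set0 \/ U = setT.

Definition is_bounded (f : S -> R) : Prop :=
  exists M : R, forall x, `|f x| <= M.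
Definition is_lipschitz (f : S -> R) : Prop :=
  exists L : R, forall x y, `|f x - f y| <= L * d x y.

Definition BL (f : S -> R) : Prop := is_bounded f /\ is_lipschitz f.

Definition sup_norm (f : S -> R) : R := sup [set `|f x| | x in [set: S]].
Definition lip_const (f : S -> R) : R :=
  sup [set r | exists x y, x <> y /\ r = `|f x - f y| / d x y].

Definition BL_norm (f : S -> R) : R := sup_norm f + lip_const f.
Definition FM_norm (f : S -> R) : R := Num.max (sup_norm f) (lip_const f).

Definition ball_BL : set (S -> R) := [set f | BL f /\ BL_norm f <= 1].
Definition ball_FM : set (S -> R) := [set f | BL f /\ FM_norm f <= 1].

Definition Mset (f : S -> R) : set S := [set x | `|f x| = sup_norm f].

Definition J_FM : set (S -> R) :=
  [set f | ball_FM f /\ sup_norm f = 1 /\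
     exists P : set S, finite_set P /\ P !=set0 /\
       forall x, ~ Mset f x -> exists2 p, P p & `|f x - f p| = d x p].

Definition hatJ_BL : set (S -> R) :=
  [set f | ball_BL f /\ BL_norm f = 1 /\
     (forall y, (exists2 x, Mset f x & f x = y) <->
                (y = sup_norm f \/ y = - sup_norm f)) /\
     exists P : set S, finite_set P /\ P !=set0 /\
       forall x, ~ Mset f x -> exists2 p, P p &
         `|f x - f p| = (1 - sup_norm f) * d x p].

Definition J_BL : set (S -> R) :=
  [set f | f = (fun _ => 1) \/ f = (fun _ => -1) \/ hatJ_BL f].

End Defs.

Definition extreme_points (R : realType) (S : Type) (A : set (S -> R)) : set (S -> R) :=
  [set f | A f /\ forall (g h : S -> R) (t : R), A g -> A h -> 0 < t -> t < 1 ->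
       f = (fun x => t * g x + (1 - t) * h x) -> g = h].

From mathcomp Require Import all_boot all_order all_algebra.
From mathcomp Require Import all_classical all_reals.
From mathcomp Require Import lra ring.
Set Implicit Arguments. Unset Strict Implicit. Unset Printing Implicit Defensive.
Import Order.TTheory GRing.Theory Num.Theory.
Local Open Scope classical_set_scope.
Local Open Scope ring_scope.

(* If f = t g + (1 - t) h with g, h in the unit ball, every estimate bounding
   the norm of f by those of g and h must be an equality.  So g and h agree in
   sign and size with f where |f| attains its sup, and along each pair (x, p)
   given by the definition of J their increments are extremal.  Consequently a
   suitable Lipschitz combination of g - h and f takes only finitely many
   values; being locally constant it is constant on the connected space S, and
   the value of that constant forces g = h. *)

Section RealFacts.
Variable R : realType.
Implicit Types (t a b A B M : R) (E V : set R).

Lemma convex_eq_ub t a b A B : 0 < t -> t < 1 -> a <= A -> b <= B ->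
  t * a + (1 - t) * b = t * A + (1 - t) * B -> a = A /\ b = B.
Proof. by move=> *; split; nra. Qed.

Lemma convex_eq_normr_ub t a b A B : 0 < t -> t < 1 -> `|a| <= A -> `|b| <= B ->
  t * a + (1 - t) * b = t * A + (1 - t) * B -> a = A /\ b = B.
Proof.
move=> t0 t1 aA bB; apply: convex_eq_ub => //.
  exact: le_trans (ler_norm _) aA.
exact: le_trans (ler_norm _) bB.
Qed.

Lemma convex_normr_eq t a b A B : 0 < t -> t < 1 -> `|a| <= A -> `|b| <= B ->
  `|t * a + (1 - t) * b| = t * A + (1 - t) * B ->
  (a = A /\ b = B) \/ (a = - A /\ b = - B).
Proof.
move=> t0 t1 aA bB; case: (lerP 0 (t * a + (1 - t) * b)) => [ge0|lt0].
  by rewrite ger0_norm // => /(convex_eq_normr_ub t0 t1 aA bB); left.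
rewrite ltr0_norm // => e; right.
rewrite -normrN in aA; rewrite -normrN in bB.
have [<- <-] : - a = A /\ - b = B.
  by apply: (convex_eq_normr_ub t0 t1 aA bB); rewrite -e; ring.
by rewrite !opprK.
Qed.

Lemma normr_convex_le1 t a b : 0 < t -> t < 1 -> `|a| <= 1 -> `|b| <= 1 ->
  `|t * a + (1 - t) * b| <= 1 - t * (1 - t) * `|a - b|.
Proof.
rewrite !ler_norml => t0 t1 /andP[a1 a2] /andP[b1 b2].
have P3 (x y z : R) : 0 <= x -> 0 <= y -> 0 <= z -> 0 <= x * y * z.
  by move=> *; rewrite !mulr_ge0.
have : [/\ 0 <= t * t * (a + 1), 0 <= t * t * (1 - a),
           0 <= (1 - t) * (1 + t) * (b + 1), 0 <= (1 - t) * (1 + t) * (1 - b) &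
         [/\ 0 <= t * (2 - t) * (a + 1), 0 <= t * (2 - t) * (1 - a),
             0 <= (1 - t) * (1 - t) * (b + 1) & 0 <= (1 - t) * (1 - t) * (1 - b)]].
  by do !split; apply: P3; lra.
case: (lerP 0 (a - b)) => ab; [rewrite (ger0_norm ab)|rewrite (ltr0_norm ab)].
all: by move=> [? ? ? ? [? ? ? ?]]; apply/andP; split; lra.
Qed.

Lemma finite_set_sep V a : finite_set V ->
  exists2 e, 0 < e & forall v, V v -> v <> a -> e <= `|v - a|.
Proof.
move=> /finite_seqP[s ->] /=.
elim: s => [|w s [e e0 He]]; first by exists 1.
have [->|wa] := eqVneq w a.
  by exists e => // v; rewrite in_cons => /orP[/eqP->|//]; last exact: He.
exists (Num.min e `|w - a|); first by rewrite lt_min e0 normr_gt0 subr_eq0 wa.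
move=> v; rewrite in_cons => /orP[/eqP-> _|vs va].
  by rewrite ge_min lexx orbT.
by rewrite ge_min He.
Qed.

(* [sup] is 0 on sets without a supremum, in particular on the empty set. *)
Lemma sup_ge0 E : (forall r, E r -> 0 <= r) -> 0 <= sup E.
Proof.
move=> E0; have [[[r Er] ubE]|noE] := pselect (has_sup E).
  exact: le_trans (E0 r Er) (ub_le_sup ubE Er).
by rewrite sup_out.
Qed.

Lemma sup_le_nonneg E M : 0 <= M -> ubound E M -> sup E <= M.
Proof.
move=> M0 EM; have [[r Er]|E0] := pselect (E !=set0).
  by apply: ge_sup => //; exists r.
suff -> : E = set0 by rewrite sup0.
by apply/seteqP; split => // r Er; apply: E0; exists r.
Qed.

End RealFacts.

Section Metric.
Variables (R : realType) (S : Type) (d : S -> S -> R).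
Hypothesis hd : is_metric d.
Implicit Types (f g h w : S -> R) (x y : S).

Lemma metricxx x : d x x = 0.
Proof. by case: hd => dP _; apply/dP. Qed.

Lemma metricC x y : d x y = d y x.
Proof. by case: hd => _ []. Qed.

Lemma metric_ge0 x y : 0 <= d x y.
Proof.
by case: hd => _ [_ tri]; have := tri x y x; rewrite metricxx (metricC y x); lra.
Qed.

Lemma metric_gt0 x y : x <> y -> 0 < d x y.
Proof.
move=> xy; rewrite lt_neqAle metric_ge0 andbT eq_sym.
by apply/eqP => dxy0; apply: xy; apply/(proj1 hd).
Qed.

Lemma sup_norm_ub f x : is_bounded f -> `|f x| <= sup_norm f.
Proof.
by move=> [M fM]; apply: ub_le_sup; [exists M => _ [y _ <-]|exists x].
Qed.

Lemma sup_norm_ge0 f : 0 <= sup_norm f.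
Proof. by apply: sup_ge0 => _ [x _ <-]. Qed.

Lemma sup_norm_le f M : 0 <= M -> (forall x, `|f x| <= M) -> sup_norm f <= M.
Proof. by move=> M0 fM; apply: sup_le_nonneg => // _ [x _ <-]. Qed.

Lemma lip_const_ub f x y : is_lipschitz d f ->
  `|f x - f y| <= lip_const d f * d x y.
Proof.
move=> [L fL]; have [->|xy] := pselect (x = y).
  by rewrite subrr normr0 metricxx mulr0.
have dxy := metric_gt0 xy.
rewrite -ler_pdivrMr //; apply: ub_le_sup; last by exists x, y.
exists L => _ [a [b [ab ->]]]; rewrite ler_pdivrMr; [exact: fL|exact: metric_gt0].
Qed.

Lemma lip_const_ge0 f : 0 <= lip_const d f.
Proof.
by apply: sup_ge0 => _ [x [y [xy ->]]]; rewrite divr_ge0 ?metric_ge0.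
Qed.

Lemma lip_const_le f M : 0 <= M ->
  (forall x y, `|f x - f y| <= M * d x y) -> lip_const d f <= M.
Proof.
move=> M0 fM; apply: sup_le_nonneg => // _ [x [y [xy ->]]].
by rewrite ler_pdivrMr; [exact: fM|exact: metric_gt0].
Qed.

Lemma lipschitzB f g : is_lipschitz d f -> is_lipschitz d g ->
  is_lipschitz d (fun x => f x - g x).
Proof.
move=> [K fK] [L gL]; exists (K + L) => x y.
have -> : f x - g x - (f y - g y) = (f x - f y) - (g x - g y) by ring.
by rewrite mulrDl; apply: le_trans (ler_normB _ _) _; apply: lerD.
Qed.

Lemma lipschitzZ a f : is_lipschitz d f -> is_lipschitz d (fun x => a * f x).
Proof.
move=> [K fK]; exists (`|a| * K) => x y.
by rewrite -mulrBr normrM -mulrA; apply: ler_wpM2l.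
Qed.

Lemma lipschitz_locally_cst w (V : set R) x : is_lipschitz d w ->
  finite_set V -> (forall y, V (w y)) ->
  exists2 e, 0 < e & forall y, d x y < e -> w y = w x.
Proof.
move=> [L wL] finV wV; have [e e0 sepV] := finite_set_sep (w x) finV.
have L1 : 0 < `|L| + 1 by have := normr_ge0 L; lra.
exists (e / (`|L| + 1)); first exact: divr_gt0.
move=> y; rewrite ltr_pdivlMr // => dxy; apply: contrapT => wyx.
have := sepV _ (wV y) wyx.
have : `|w y - w x| <= `|L| * d x y.
  rewrite metricC; apply: le_trans (wL y x) _.
  by apply: ler_wpM2r; [exact: metric_ge0|exact: ler_norm].
have := metric_ge0 x y; lra.
Qed.

Hypothesis hconn : metric_connected d.

Lemma lipschitz_finite_range_cst w (V : set R) : is_lipschitz d w ->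
  finite_set V -> (forall x, V (w x)) -> forall x y, w x = w y.
Proof.
move=> wL finV wV x0 y; pose U := [set x | w x = w x0].
have oU : metric_open d U /\ metric_open d (~` U).
  split=> x Ux; have [e e0 we] := lipschitz_locally_cst x wL finV wV.
    by exists e => // z /we; rewrite /U /= => ->.
  by exists e => // z /we wzx; rewrite /setC /U /= wzx.
have Ux0 : U x0 by [].
case: (hconn oU.1 oU.2) => UT; first by move: Ux0; rewrite UT.
have : U y by rewrite UT.
by rewrite /U /= => ->.
Qed.

Lemma lipschitz_anchored_cst w (W : set R) (P : set S) : is_lipschitz d w ->
  finite_set W -> finite_set P ->
  (forall x, W (w x) \/ exists2 p, P p & w x = w p) -> forall x y, w x = w y.
Proof.
move=> wL finW finP wWP.
apply: (lipschitz_finite_range_cst (V := W `|` w @` P)) => //.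
  by rewrite finite_setU; split => //; exact: finite_image.
by move=> x; case: (wWP x) => [Wx|[p Pp ->]]; [left|right; exists p].
Qed.

Lemma ball_FM_le1 g : ball_FM d g ->
  (forall x, `|g x| <= 1) /\ (forall x y, `|g x - g y| <= d x y).
Proof.
move=> [[gb gL]]; rewrite /FM_norm ge_max => /andP[s1 L1]; split=> [x|x y].
  exact: le_trans (sup_norm_ub x gb) s1.
apply: le_trans (lip_const_ub x y gL) _.
by rewrite ler_piMl ?metric_ge0.
Qed.

Lemma ball_BL_le1 g x : ball_BL d g -> `|g x| <= 1.
Proof.
move=> [[gb _] g1]; have := sup_norm_ub x gb; have := lip_const_ge0 g.
by rewrite /BL_norm in g1; lra.
Qed.

Lemma ball_BL_cst c : `|c| = 1 -> ball_BL d (fun=> c).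
Proof.
move=> c1; have cL : forall x y, `|c - c| <= 0 * d x y.
  by move=> x y; rewrite subrr normr0 mul0r.
split; first by split; [exists 1 => x; rewrite c1|exists 0].
rewrite /BL_norm; have := lip_const_le (lexx 0) cL.
have : sup_norm (fun _ : S => c) <= 1 by apply: sup_norm_le => // x; rewrite c1.
lra.
Qed.

Lemma hatJ_BL_sup_norm_neq1 f : hatJ_BL d f -> sup_norm f != 1.
Proof.
move=> [[[_ fL] _] [f1 [fM _]]]; apply/eqP => s1.
have [x1 _ fx1] := (fM (sup_norm f)).2 (or_introl erefl).
have [x2 _ fx2] := (fM (- sup_norm f)).2 (or_intror erefl).
have := lip_const_ub x1 x2 fL; rewrite fx1 fx2 (_ : lip_const d f = 0) ?mul0r.
  by move/(le_trans (ler_norm _)); lra.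
by move: f1; rewrite /BL_norm s1; lra.
Qed.

Section ConvexCombination.
Variables (g h f : S -> R) (t : R).
Hypothesis fE : f = (fun x => t * g x + (1 - t) * h x).

Lemma convex_combB x y : f x - f y = t * (g x - g y) + (1 - t) * (h x - h y).
Proof. by rewrite fE; ring. Qed.

Lemma sup_norm_convex : 0 <= t -> t <= 1 -> is_bounded g -> is_bounded h ->
  sup_norm f <= t * sup_norm g + (1 - t) * sup_norm h.
Proof.
move=> t0 t1 gb hb; have t1' : 0 <= 1 - t by lra.
apply: sup_norm_le => [|x].
  by rewrite addr_ge0 // mulr_ge0 ?sup_norm_ge0.
rewrite fE; apply: le_trans (ler_normD _ _) _.
rewrite !normrM (ger0_norm t0) (ger0_norm t1').
by apply: lerD; apply: ler_wpM2l => //; exact: sup_norm_ub.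
Qed.

Lemma lip_const_convex : 0 <= t -> t <= 1 ->
  is_lipschitz d g -> is_lipschitz d h ->
  lip_const d f <= t * lip_const d g + (1 - t) * lip_const d h.
Proof.
move=> t0 t1 gL hL; have t1' : 0 <= 1 - t by lra.
apply: lip_const_le => [|x y].
  by rewrite addr_ge0 // mulr_ge0 ?lip_const_ge0.
rewrite convex_combB; apply: le_trans (ler_normD _ _) _.
rewrite !normrM (ger0_norm t0) (ger0_norm t1') [X in _ <= X]mulrDl -!mulrA.
by apply: lerD; apply: ler_wpM2l => //; exact: lip_const_ub.
Qed.

Lemma eq_at_normr1 x : 0 < t -> t < 1 ->
  `|g x| <= 1 -> `|h x| <= 1 -> `|f x| = 1 -> g x = h x.
Proof.
move=> t0 t1 gx hx fx.
have e : `|t * g x + (1 - t) * h x| = t * 1 + (1 - t) * 1.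
  by move: fx; rewrite fE /= => ->; ring.
by case: (convex_normr_eq t0 t1 gx hx e) => [[-> ->]|[-> ->]].
Qed.

Lemma J_FM_convex_eq : 0 < t -> t < 1 ->
  ball_FM d g -> ball_FM d h -> J_FM d f -> g = h.
Proof.
move=> t0 t1 gB hB [_ [f1 [P [finP [_ fP]]]]].
have [gb gl] := ball_FM_le1 gB; have [hb hl] := ball_FM_le1 hB.
pose u x := g x - h x.
have u_anchored x : [set 0] (u x) \/ exists2 p, P p & u x = u p.
  have [Mx|/fP[p Pp fxp]] := pselect (Mset f x).
    by left; rewrite /= /u (eq_at_normr1 t0 t1 (gb x) (hb x)) ?subrr // Mx.
  right; exists p => //.
  have e : `|t * (g x - g p) + (1 - t) * (h x - h p)|
           = t * d x p + (1 - t) * d x p.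
    by rewrite -convex_combB fxp; ring.
  by case: (convex_normr_eq t0 t1 (gl x p) (hl x p) e) => -[]; rewrite /u; lra.
have uL : is_lipschitz d u.
  by apply: lipschitzB; [case: gB => -[]|case: hB => -[]].
have u_cst := lipschitz_anchored_cst uL (finite_set1 0) finP u_anchored.
apply/funext => x; apply/eqP; rewrite -subr_eq0 -normr_eq0 -/(u x).
have fb y : `|f y| <= 1 - t * (1 - t) * `|u x|.
  by rewrite fE /= (u_cst x y); apply: normr_convex_le1.
have : sup_norm f <= 1 - t * (1 - t) * `|u x|.
  exact: sup_norm_le (le_trans (normr_ge0 _) (fb x)) fb.
have tt : 0 < t * (1 - t) by apply: mulr_gt0; lra.
rewrite f1 eq_le normr_ge0 andbT; nra.
Qed.

Lemma cst_convex_eq c : 0 < t -> t < 1 -> `|c| = 1 ->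
  ball_BL d g -> ball_BL d h -> f = (fun=> c) -> g = h.
Proof.
move=> t0 t1 c1 gB hB fc; apply/funext => x.
by apply: eq_at_normr1 => //; [exact: ball_BL_le1|exact: ball_BL_le1|rewrite fc].
Qed.

Lemma BL_norm_convex_eq1 : 0 < t -> t < 1 ->
  ball_BL d g -> ball_BL d h -> BL_norm d f = 1 ->
  [/\ sup_norm g + lip_const d g = 1, sup_norm h + lip_const d h = 1,
      sup_norm f = t * sup_norm g + (1 - t) * sup_norm h &
      lip_const d f = t * lip_const d g + (1 - t) * lip_const d h].
Proof.
move=> t0 t1 [[gb gL] gn] [[hb hL] hn]; rewrite /BL_norm in gn hn * => fn.
have sf := sup_norm_convex (ltW t0) (ltW t1) gb hb.
have lf := lip_const_convex (ltW t0) (ltW t1) gL hL.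
have tight : t * (sup_norm g + lip_const d g) + (1 - t) * (sup_norm h + lip_const d h)
              = t * 1 + (1 - t) * 1.
  have t1' : 0 <= 1 - t by lra.
  have := ler_wpM2l (ltW t0) gn; have := ler_wpM2l t1' hn; lra.
have [eg eh] := convex_eq_ub t0 t1 gn hn tight.
have tg : t * sup_norm g + t * lip_const d g = t by rewrite -mulrDr eg mulr1.
have th : (1 - t) * sup_norm h + (1 - t) * lip_const d h = 1 - t.
  by rewrite -mulrDr eh mulr1.
by split => //; lra.
Qed.

(* Constant on S by connectedness, while at points where f = +- sup_norm f it
   equals +- (sup_norm g - sup_norm h); hence sup_norm g = sup_norm h, and then
   g = h since sup_norm f <> 1. *)
Definition BL_defect x :=
  (1 - sup_norm f) * (g x - h x) - (lip_const d g - lip_const d h) * f x.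

Lemma BL_defect_lipschitz : is_lipschitz d g -> is_lipschitz d h ->
  is_lipschitz d f -> is_lipschitz d BL_defect.
Proof.
by move=> gL hL fL; apply: lipschitzB; apply: lipschitzZ => //; exact: lipschitzB.
Qed.

Section TightCombination.
Hypotheses (t0 : 0 < t) (t1 : t < 1) (gb : is_bounded g) (hb : is_bounded h).
Hypothesis es : sup_norm f = t * sup_norm g + (1 - t) * sup_norm h.
Hypothesis eLgh : lip_const d g - lip_const d h = sup_norm h - sup_norm g.

Lemma BL_defect_top x : f x = sup_norm f ->
  BL_defect x = sup_norm g - sup_norm h.
Proof.
move=> fx; have [gxE hxE] : g x = sup_norm g /\ h x = sup_norm h.
  apply: (convex_eq_normr_ub t0 t1 (sup_norm_ub x gb) (sup_norm_ub x hb)).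
  by rewrite -es -fx fE.
by rewrite /BL_defect fx gxE hxE eLgh; ring.
Qed.

Lemma BL_defect_bot x : f x = - sup_norm f ->
  BL_defect x = - (sup_norm g - sup_norm h).
Proof.
move=> fx; have [gxE hxE] : - g x = sup_norm g /\ - h x = sup_norm h.
  apply: (convex_eq_normr_ub t0 t1); rewrite ?normrN; try exact: sup_norm_ub.
  by rewrite -es -[sup_norm f]opprK -fx fE /=; ring.
by rewrite /BL_defect fx eLgh -gxE -hxE; ring.
Qed.

Lemma BL_defect_Mset x : Mset f x ->
  [set sup_norm g - sup_norm h; - (sup_norm g - sup_norm h)] (BL_defect x).
Proof.
rewrite /Mset /=; case: (lerP 0 (f x)) => fx0.
  by rewrite ger0_norm // => /BL_defect_top; left.
by rewrite ltr0_norm // => fxs; right; apply: BL_defect_bot; rewrite -fxs opprK.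
Qed.

Hypotheses (gL : is_lipschitz d g) (hL : is_lipschitz d h).
Hypothesis e1s : 1 - sup_norm f = t * lip_const d g + (1 - t) * lip_const d h.

Lemma BL_defect_step x p : `|f x - f p| = (1 - sup_norm f) * d x p ->
  BL_defect x = BL_defect p.
Proof.
move=> fxp; apply/eqP; rewrite -subr_eq0; apply/eqP.
have e : `|t * (g x - g p) + (1 - t) * (h x - h p)|
         = t * (lip_const d g * d x p) + (1 - t) * (lip_const d h * d x p).
  by rewrite -convex_combB fxp e1s; ring.
have -> : BL_defect x - BL_defect p = (1 - sup_norm f) * ((g x - g p) - (h x - h p))
          - (lip_const d g - lip_const d h) * (f x - f p).
  by rewrite /BL_defect; ring.
rewrite convex_combB e1s.
have := convex_normr_eq t0 t1 (lip_const_ub x p gL) (lip_const_ub x p hL) e.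
by case=> -[-> ->]; ring.
Qed.

End TightCombination.

Lemma hatJ_BL_convex_eq : 0 < t -> t < 1 ->
  ball_BL d g -> ball_BL d h -> hatJ_BL d f -> g = h.
Proof.
move=> t0 t1 gB hB fJ; have s1 := hatJ_BL_sup_norm_neq1 fJ.
move: fJ => [[[_ fL] _] [f1 [fM [P [finP [_ fP]]]]]].
have [[gb gL] _] := gB; have [[hb hL] _] := hB.
have [eg eh es eL] := BL_norm_convex_eq1 t0 t1 gB hB f1.
have eLgh : lip_const d g - lip_const d h = sup_norm h - sup_norm g by lra.
have e1s : 1 - sup_norm f = t * lip_const d g + (1 - t) * lip_const d h.
  by move: f1; rewrite /BL_norm eL; lra.
have top := BL_defect_top t0 t1 gb hb es eLgh.
have bot := BL_defect_bot t0 t1 gb hb es eLgh.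
have anchored x : [set sup_norm g - sup_norm h; - (sup_norm g - sup_norm h)]
    (BL_defect x) \/ exists2 p, P p & BL_defect x = BL_defect p.
  have [Mx|/fP[p Pp fxp]] := pselect (Mset f x).
    by left; apply: BL_defect_Mset.
  by right; exists p => //; apply: BL_defect_step fxp.
have finW : finite_set [set sup_norm g - sup_norm h; - (sup_norm g - sup_norm h)].
  by rewrite finite_setU; split; exact: finite_set1.
have cL := BL_defect_lipschitz gL hL fL.
have cst := lipschitz_anchored_cst cL finW finP anchored.
have [x1 _ fx1] := (fM _).2 (or_introl erefl).
have [x2 _ fx2] := (fM _).2 (or_intror erefl).
have sgh : sup_norm g = sup_norm h.
  by have := cst x1 x2; rewrite (top _ fx1) (bot _ fx2); lra.
apply/funext => x; apply/eqP; rewrite -subr_eq0.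
have := cst x1 x; rewrite (top _ fx1) /BL_defect eLgh sgh !subrr mul0r subr0.
by move/esym/eqP; rewrite mulf_eq0 !subr_eq0 eq_sym (negbTE s1).
Qed.

End ConvexCombination.

End Metric.

Theorem proposition5p3 (R : realType) (S : Type) (d : S -> S -> R)
  (hd : is_metric d) (hconn : metric_connected d) :
  J_FM d `<=` extreme_points (ball_FM d) /\
  J_BL d `<=` extreme_points (ball_BL d).
Proof.
split=> f fJ; split.
- by case: fJ.
- by move=> g h t gB hB t0 t1 fE; apply: (J_FM_convex_eq hd hconn fE).
- case: fJ => [->|[->|[]]] //; apply: ball_BL_cst => //.
    by rewrite normr1.
  by rewrite normrN normr1.
- move=> g h t gB hB t0 t1 fE.
  case: fJ => [fc|[fc|fJ]]; last exact: (hatJ_BL_convex_eq hd hconn fE).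
    by apply: (cst_convex_eq hd fE t0 t1 _ gB hB fc); rewrite normr1.
  by apply: (cst_convex_eq hd fE t0 t1 _ gB hB fc); rewrite normrN normr1.
Qed.
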